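(* Let $k\geq 2$ and $n\geq 3$ be integers. If $n\nrightarrow(3)_k^2$, then $2^n\nrightarrow(5)_k^3$.
   Context: For $m\in\mathbb N$ write $[m]=\{0,\dots,m-1\}$. For $n>r\geq1$, $k\geq2$, $n\geq s>r$, the relation $n\to(s)_k^r$ means that every colouring of the $r$-element subsets of $[n]$ with $k$ colours admits a subset of $[n]$ of size $s$ all of whose $r$-subsets receive the same colour; $n\nrightarrow(s)_k^r$ is its negation. *)

From mathcomp Require Import all_boot.
Set Implicit Arguments. Unset Strict Implicit. Unset Printing Implicit Defensive.

(* A k-colouring of the r-element subsets of [n] = 'I_n is represented by a
   function c : {set 'I_n} -> 'I_k; only its values on r-element sets matter. *)

Definition monochromatic (n k r : nat) (c : {set 'I_n} -> 'I_k) (S : {set 'I_n}) : Prop :=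
  exists col : 'I_k, forall A : {set 'I_n}, A \subset S -> #|A| = r -> c A = col.

Definition arrow (n s k r : nat) : Prop :=
  forall c : {set 'I_n} -> 'I_k,
    exists S : {set 'I_n}, #|S| = s /\ monochromatic r c S.

(* Identify x < 2^n with its n-bit binary expansion and let [split_level x y]
   be one plus the highest bit where x and y differ, i.e. the least j such
   that x and y lie in the same dyadic block of length 2^j.  On an increasing
   triple x < y < z the levels of (x,y) and (y,z) differ and the level of
   (x,z) is their maximum (an ultrametric).  A colouring c of pairs of levels
   induces a colouring of triples of [2^n]: colour {x,y,z} by c applied to
   the set of its split levels, which is a pair.

   Given a 5-set a < b < c < d < e monochromatic for the induced colouring,
   the level sequence of consecutive elements forces, for one of the windows
   a<b<c<d or b<c<d<e, three distinct levels all of whose pairs are realised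
   by triples of the window (lemma [window_triangle]); these three levels form
   a monochromatic triangle for c. *)

From mathcomp Require Import zify.
From mathcomp Require Import all_boot.
Set Implicit Arguments. Unset Strict Implicit. Unset Printing Implicit Defensive.

Definition same_block (j x y : nat) : bool := x %/ 2 ^ j == y %/ 2 ^ j.

Lemma same_blockS j x y : same_block j.+1 x y = same_block j x./2 y./2.
Proof. by rewrite /same_block -!divn2 -!divnMA expnS mulnC. Qed.

Fixpoint split_level (f x y : nat) : nat :=
  if f is f'.+1 then (if x == y then 0 else (split_level f' x./2 y./2).+1)
  else 0.

Lemma split_levelP f x y j : x < 2 ^ f -> y < 2 ^ f ->
  same_block j x y = (split_level f x y <= j).
Proof.
elim: f x y j => [|f IH] x y j /=.
  by rewrite expn0 !ltnS !leqn0 => /eqP -> /eqP ->; rewrite /same_block eqxx.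
move=> hx hy; case: eqP => [->|ne]; first by rewrite /same_block eqxx.
case: j => [|j]; first by rewrite /same_block expn0 !divn1; apply/eqP.
have half_lt u : u < 2 ^ f.+1 -> u./2 < 2 ^ f.
  by rewrite -divn2 ltn_divLR // -expnSr.
by rewrite same_blockS ltnS IH // half_lt.
Qed.

Lemma eq_from_leq a b : (forall j, (a <= j) = (b <= j)) -> a = b.
Proof. by move=> h; apply/eqP; rewrite eqn_leq -h leqnn h leqnn. Qed.

Section SplitLevel.

Variable n : nat.
Local Notation lvl := (split_level n).

Lemma lvl_sym x y : x < 2 ^ n -> y < 2 ^ n -> lvl x y = lvl y x.
Proof.
by move=> hx hy; apply: eq_from_leq => j; rewrite -!split_levelP // /same_block eq_sym.
Qed.

Lemma lvl_le x y : x < 2 ^ n -> y < 2 ^ n -> lvl x y <= n.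
Proof. by move=> hx hy; rewrite -split_levelP // /same_block !divn_small. Qed.

Lemma lvl_gt0 x y : x < 2 ^ n -> y < 2 ^ n -> x != y -> 0 < lvl x y.
Proof. by move=> hx hy ne; rewrite lt0n -leqn0 -split_levelP // /same_block expn0 !divn1. Qed.

(* Dyadic blocks are intervals: a block containing x <= z contains all between. *)
Lemma same_block_between j x y z : x <= y <= z ->
  same_block j x z -> same_block j x y && same_block j y z.
Proof.
move=> /andP[h1 h2]; rewrite /same_block => /eqP e.
have a := leq_div2r (2 ^ j) h1; have b := leq_div2r (2 ^ j) h2.
by apply/andP; split; apply/eqP; lia.
Qed.

Lemma lvl_max x y z : x < y -> y < z -> z < 2 ^ n ->
  lvl x z = maxn (lvl x y) (lvl y z).
Proof.
move=> xy yz hz; have hy : y < 2 ^ n by lia.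
have hx : x < 2 ^ n by lia.
apply: eq_from_leq => j; rewrite geq_max -!split_levelP //.
apply/idP/idP; first by apply: same_block_between; lia.
by rewrite /same_block => /andP[/eqP -> /eqP ->].
Qed.

(* On an increasing triple the two consecutive split levels differ: at level
   d = lvl x y - 1, x and y lie in distinct halves of one block of size 2^(d+1),
   so y and z cannot also split there. *)
Lemma lvl_neq x y z : x < y -> y < z -> z < 2 ^ n -> lvl x y != lvl y z.
Proof.
move=> xy yz hz; have hy : y < 2 ^ n by lia.
have hx : x < 2 ^ n by lia.
apply/eqP => e; have := lvl_gt0 hx hy (negbT (ltn_eqF xy)).
case Exy: (lvl x y) e => [|d] // e _.
have B1 : same_block d.+1 x y by rewrite (split_levelP _ hx hy) Exy.
have B2 : same_block d.+1 y z by rewrite (split_levelP _ hy hz) -e.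
have N1 : ~~ same_block d x y by rewrite (split_levelP _ hx hy) Exy ltnn.
have N2 : ~~ same_block d y z by rewrite (split_levelP _ hy hz) -e ltnn.
move: B1 B2 N1 N2; rewrite /same_block expnSr !divnMA => /eqP e1 /eqP e2 n1 n2.
have a := leq_div2r (2 ^ d) (ltnW xy); have b := leq_div2r (2 ^ d) (ltnW yz).
move: (x %/ 2 ^ d) (y %/ 2 ^ d) (z %/ 2 ^ d) e1 e2 n1 n2 a b => X Y Z e1 e2 n1 n2 a b.
have : X < Y by rewrite ltn_neqAle n1 a.
have : Y < Z by rewrite ltn_neqAle n2 b.
lia.
Qed.

End SplitLevel.

Definition levels n (A : {set 'I_(2 ^ n)}) : {set 'I_n} :=
  [set i : 'I_n | [exists a in A, exists b in A,
     (a != b) && (val i == (split_level n a b).-1)]].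

Definition lift_colouring n k (c : {set 'I_n} -> 'I_k) (A : {set 'I_(2 ^ n)}) : 'I_k :=
  c (levels A).

Lemma level_lt n (x y : 'I_(2 ^ n)) : x != y -> (split_level n x y).-1 < n.
Proof.
move=> xy; have := lvl_gt0 (ltn_ord x) (ltn_ord y) xy.
by have := lvl_le (ltn_ord x) (ltn_ord y); lia.
Qed.

Lemma ord_neq_of_lt N (a b : 'I_N) : a < b -> a != b.
Proof. by move=> ab; rewrite -val_eqE /= ltn_eqF. Qed.

Lemma card_set3 (T : finType) (a b e : T) :
  a != b -> a != e -> b != e -> #|[set a; b; e]| = 3.
Proof.
move=> ab ae be; rewrite -setUA cardsU1 cards2 !inE be.
by rewrite (negbTE ab) (negbTE ae).
Qed.

Lemma levels_triple n (x y z : 'I_(2 ^ n)) (p q : 'I_n) :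
  x < y -> y < z -> val p = (split_level n x y).-1 -> val q = (split_level n y z).-1 ->
  levels [set x; y; z] = [set p; q].
Proof.
move=> xy yz hp hq.
have hx := ltn_ord x; have hy := ltn_ord y; have hz := ltn_ord z.
have Mxz := lvl_max xy yz hz.
have Sxy := lvl_sym hx hy; have Syz := lvl_sym hy hz; have Sxz := lvl_sym hx hz.
have Pxy := lvl_gt0 hx hy (negbT (ltn_eqF xy)).
have Pyz := lvl_gt0 hy hz (negbT (ltn_eqF yz)).
apply/setP=> i; rewrite !inE -!val_eqE hp hq; apply/idP/idP.
  case/exists_inP=> a ha /exists_inP[b hb /andP[ab /eqP ->]].
  move: ha hb; rewrite !inE => /orP[/orP[]|]/eqP Ea /orP[/orP[]|]/eqP Eb; subst a b;
    rewrite ?eqxx // in ab *; lia.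
case/orP=> /eqP ->; apply/exists_inP.
  exists x; rewrite ?inE ?eqxx //; apply/exists_inP; exists y; rewrite ?inE ?eqxx ?orbT //.
  by rewrite ?eqxx ?andbT -val_eqE /= ltn_eqF.
exists y; rewrite ?inE ?eqxx ?orbT //; apply/exists_inP; exists z; rewrite ?inE ?eqxx ?orbT //.
by rewrite ?eqxx ?andbT -val_eqE /= ltn_eqF.
Qed.

Lemma mono_triangle n k (c : {set 'I_n} -> 'I_k) (col : 'I_k) (p1 p2 p3 : 'I_n) :
  p1 != p2 -> p1 != p3 -> p2 != p3 ->
  c [set p1; p2] = col -> c [set p2; p3] = col -> c [set p1; p3] = col ->
  exists T : {set 'I_n}, #|T| = 3 /\ monochromatic 2 c T.
Proof.
move=> d12 d13 d23 c12 c23 c13; exists [set p1; p2; p3]; split; first exact: card_set3.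
exists col => A sAT /eqP/cards2P[u [v [uv EA]]]; subst A.
have hu : u \in [set p1; p2; p3] by apply: (subsetP sAT); rewrite !inE eqxx.
have hv : v \in [set p1; p2; p3] by apply: (subsetP sAT); rewrite !inE eqxx orbT.
have set2C (p q : 'I_n) : [set p; q] = [set q; p] by apply/setP=> i; rewrite !inE orbC.
move: hu hv uv; rewrite !inE => /orP[/orP[]|]/eqP-> /orP[/orP[]|]/eqP->;
  rewrite ?eqxx // => _; try done; by rewrite set2C.
Qed.

Section MonochromaticSet.

Variables (n k : nat) (c : {set 'I_n} -> 'I_k) (S : {set 'I_(2 ^ n)}) (col : 'I_k).
Hypothesis monoS :
  forall A : {set 'I_(2 ^ n)}, A \subset S -> #|A| = 3 -> lift_colouring c A = col.
Local Notation lvl := (split_level n).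

Lemma triple_colour (x y z : 'I_(2 ^ n)) (p q : 'I_n) :
  x \in S -> y \in S -> z \in S -> x < y -> y < z ->
  val p = (lvl x y).-1 -> val q = (lvl y z).-1 -> c [set p; q] = col.
Proof.
move=> xS yS zS xy yz hp hq; rewrite -(levels_triple xy yz hp hq); apply: monoS.
  by apply/subsetP=> t; rewrite !inE => /orP[/orP[]|]/eqP->.
by apply: card_set3; apply: ord_neq_of_lt; [| apply: ltn_trans yz |].
Qed.

(* The key window: four increasing points of S whose outer levels differ and
   whose middle level is not the largest yield a monochromatic triangle of
   levels: the two outer levels are realised together by (x,y,w) or (x,z,w). *)
Lemma window_triangle (x y z w : 'I_(2 ^ n)) :
  x \in S -> y \in S -> z \in S -> w \in S -> x < y -> y < z -> z < w ->
  lvl x y != lvl z w -> (lvl y z < lvl z w) || (lvl y z < lvl x y) ->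
  exists T : {set 'I_n}, #|T| = 3 /\ monochromatic 2 c T.
Proof.
move=> xS yS zS wS xy yz zw d13 middle.
have hz := ltn_ord z; have hw := ltn_ord w.
pose p1 := Ordinal (level_lt (ord_neq_of_lt xy)).
pose p2 := Ordinal (level_lt (ord_neq_of_lt yz)).
pose p3 := Ordinal (level_lt (ord_neq_of_lt zw)).
have d12 := lvl_neq xy yz hz; have d23 := lvl_neq yz zw hw.
have pos (a b : 'I_(2 ^ n)) : a < b -> 0 < lvl a b.
  by move=> ab; apply: lvl_gt0 (ltn_ord a) (ltn_ord b) (ord_neq_of_lt ab).
have P1 := pos _ _ xy; have P2 := pos _ _ yz; have P3 := pos _ _ zw.
apply: (@mono_triangle _ _ c col p1 p2 p3); rewrite -?val_eqE /=; try lia.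
- exact: (triple_colour xS yS zS xy yz).
- exact: (triple_colour yS zS wS yz zw).
- case/orP: middle => middle.
    apply: (triple_colour xS yS wS xy (ltn_trans yz zw)) => //=.
    by rewrite (lvl_max yz zw hw); lia.
  apply: (triple_colour xS zS wS (ltn_trans xy yz) zw) => //=.
  by rewrite (lvl_max xy yz hz); lia.
Qed.

End MonochromaticSet.

Lemma sorted_enum_set N (S : {set 'I_N}) : sorted (fun a b : 'I_N => a < b) (enum S).
Proof.
have lt_trans : transitive (fun a b : 'I_N => a < b) by move=> y x z; apply: ltn_trans.
have sorted_ord : sorted ltn (map val (enum 'I_N)).
  by rewrite val_enum_ord iota_ltn_sorted.
rewrite sorted_map enumT in sorted_ord.
exact: (sorted_filter lt_trans _ sorted_ord).
Qed.

Lemma increasing_five N (S : {set 'I_N}) : #|S| = 5 ->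
  exists a b c d e : 'I_N, [/\ [/\ a \in S, b \in S, c \in S, d \in S & e \in S]
                           & [/\ a < b, b < c, c < d & d < e]].
Proof.
rewrite cardE; have := sorted_enum_set S; have memS t : t \in enum S -> t \in S.
  by rewrite mem_enum.
case: (enum S) memS => [|a [|b [|c [|d [|e [|f l]]]]]] //= memS.
case/and5P=> ab bc cd de _ _; exists a, b, c, d, e; split=> //.
by split; apply: memS; rewrite !inE eqxx ?orbT.
Qed.

(* Arithmetic core: among four consecutive levels subject to the ultrametric
   constraints of a 5-point chain, one of the two 4-windows has distinct outer
   levels and a middle level that is not the largest. *)
Lemma five_levels_pattern d1 d2 d3 d4 :
  d1 != d2 -> d2 != d3 -> d3 != d4 -> d1 != maxn d2 d3 -> maxn d2 d3 != d4 ->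
  (d1 != d3) && ((d2 < d3) || (d2 < d1)) || (d2 != d4) && ((d3 < d4) || (d3 < d2)).
Proof. by lia. Qed.

Theorem mainTheorem8 (k n : nat) (hk : 2 <= k) (hn : 3 <= n) :
  ~ arrow n 3 k 2 -> ~ arrow (2 ^ n) 5 k 3.
Proof.
move=> no_triangle arrow5; apply: no_triangle => c.
have [S [cardS [col monoS]]] := arrow5 (lift_colouring c).
have [a [b [x [d [e [[aS bS xS dS eS] [ab bx xd de]]]]]]] := increasing_five cardS.
have hx := ltn_ord x; have hd := ltn_ord d; have he := ltn_ord e.
have := five_levels_pattern (lvl_neq ab bx hx) (lvl_neq bx xd hd) (lvl_neq xd de he).
rewrite -(lvl_max bx xd hd) (lvl_neq ab (ltn_trans bx xd) hd).
rewrite (lvl_neq (ltn_trans bx xd) de he) => /(_ isT isT) /orP[]/andP[outer middle].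
- exact: (window_triangle monoS aS bS xS dS ab bx xd outer middle).
- exact: (window_triangle monoS bS xS dS eS bx xd de outer middle).
Qed.
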